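(* Let $(a_k)_{k\in\mathbb N}$ be positive numbers with $\sum_ka_k=\infty$, and suppose there exist $C\ge1$, $\alpha\in(0,1)$ and $k_*$ such that $a_{k_2}\le Ca_{k_1}$ for all integers $k_*\le k_1\le k_2\le k_1+k_1^\alpha$. Let $b_k=\min\{a_k,k^{-\alpha}\}$. Then $b_{k_2}\le Cb_{k_1}$ for all integers $k_*\le k_1\le k_2\le k_1+k_1^\alpha$, and $\sum_kb_k=\infty$. *)

From Stdlib Require Import Reals.
From Coquelicot Require Import Coquelicot.
Open Scope R_scope.

(* x^a for x >= 0 and real a > 0, with the convention 0^a = 0. *)
Definition rpow (x a : R) : R := if Req_EM_T x 0 then 0 else Rpower x a.

(* b_k = min(a_k, k^(-alpha)), with k^(-alpha) = +infinity at k = 0,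
   so b_0 = a_0. *)
Definition bseq (a : nat -> R) (alpha : R) (k : nat) : R :=
  match k with
  | O => a O
  | S _ => Rmin (a k) (Rpower (INR k) (- alpha))
  end.

Definition doubling_cond (a : nat -> R) (C alpha : R) (kstar : nat) : Prop :=
  forall k1 k2 : nat, (kstar <= k1)%nat -> (k1 <= k2)%nat ->
    INR k2 <= INR k1 + rpow (INR k1) alpha -> a k2 <= C * a k1.

Definition series_diverges (a : nat -> R) : Prop :=
  is_lim_seq (fun n => sum_n a n) p_infty.

(* Part one: [b] is the minimum of [a] and the decreasing sequence [k^-alpha],
   and both satisfy the doubling condition with constant [C >= 1].
   Part two: fix a large [N].  If [a_k <= k^-alpha] for all [k] beyond [N],
   then [b = a] there and the tails of [sum b] are those of [sum a].
   Otherwise [a_k1 > k1^-alpha] for some large [k1]; by the doubling condition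
   every [b_j] with [k1 - k1^alpha / 2 <= j <= k1] is at least
   [k1^-alpha / C], and these [k1^alpha / 2] terms add up to at least
   [1 / (2C)].  Either way every tail of [sum b] contains a block of sum at
   least [min 1 (1 / (2C))], so the series diverges. *)
From Stdlib Require Import Reals.
From Coquelicot Require Import Coquelicot.
From Stdlib Require Import Lra Lia Classical.
Open Scope R_scope.

Lemma Rmin_le_mult (C x1 y1 x2 y2 : R) :
  0 <= C -> x2 <= C * x1 -> y2 <= C * y1 -> Rmin x2 y2 <= C * Rmin x1 y1.
Proof.
  intros HC Hx Hy; rewrite Rmult_min_distr_l by exact HC.
  unfold Rmin; destruct (Rle_dec x2 y2), (Rle_dec (C * x1) (C * y1)); lra.
Qed.

Lemma Rpower_pos (x e : R) : 0 < Rpower x e.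
Proof. apply exp_pos. Qed.

Lemma Rpower_Ropp_le_l (x y e : R) :
  0 <= e -> 0 < x <= y -> Rpower y (- e) <= Rpower x (- e).
Proof.
  intros He Hxy; rewrite !Rpower_Ropp.
  apply Rinv_le_contravar; [apply Rpower_pos | now apply Rle_Rpower_l].
Qed.

Lemma Rpower_le_self (x e : R) : 1 <= x -> e <= 1 -> Rpower x e <= x.
Proof.
  intros Hx He; rewrite <- (Rpower_1 x) at 2 by lra; now apply Rle_Rpower.
Qed.

Lemma Rpower_ge_1 (x e : R) : 1 <= x -> 0 <= e -> 1 <= Rpower x e.
Proof.
  intros Hx He; rewrite <- (Rpower_O x) by lra; now apply Rle_Rpower.
Qed.

Lemma Rpower_half_ge (x e : R) :
  0 < x -> 0 <= e <= 1 -> Rpower x e / 2 <= Rpower (x / 2) e.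
Proof.
  intros Hx He; unfold Rdiv; rewrite <- Rpower_mult_distr by lra.
  assert (H2 : Rpower 2 e <= 2) by (apply Rpower_le_self; lra).
  replace (Rpower (/ 2) e) with (/ Rpower 2 e)
    by (rewrite <- Rpower_Ropp; unfold Rpower; rewrite ln_Rinv by lra;
        f_equal; ring).
  pose proof (Rpower_pos x e); pose proof (Rpower_pos 2 e).
  apply Rmult_le_compat_l; [lra | apply Rinv_le_contravar; lra].
Qed.

Lemma rpow_Rpower (x e : R) : 0 < x -> rpow x e = Rpower x e.
Proof. intros Hx; unfold rpow; destruct (Req_EM_T x 0); lra. Qed.

Lemma sum_n_m_nonneg (u : nat -> R) (n m : nat) :
  (forall k, 0 <= u k) -> 0 <= sum_n_m u n m.
Proof.
  intros Hu; apply Rle_trans with (sum_n_m (fun _ => 0) n m).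
  - rewrite sum_n_m_const; lra.
  - now apply sum_n_m_le.
Qed.

Lemma sum_n_m_ge_const (u : nat -> R) (c : R) (n m : nat) :
  (forall k, (n <= k <= m)%nat -> c <= u k) ->
  INR (S m - n) * c <= sum_n_m u n m.
Proof.
  intros Hu; rewrite <- sum_n_m_const.
  set (v k := if (Nat.leb n k && Nat.leb k m)%bool then u k else c).
  assert (Huv : sum_n_m u n m = sum_n_m v n m).
  { apply sum_n_m_ext_loc; intros k Hk; unfold v.
    now rewrite (proj2 (Nat.leb_le n k)), (proj2 (Nat.leb_le k m)) by lia. }
  rewrite Huv; apply sum_n_m_le; intros k; unfold v.
  destruct (Nat.leb_spec n k), (Nat.leb_spec k m); simpl; try lra.
  apply Hu; lia.
Qed.

Lemma sum_n_le (u : nat -> R) (n m : nat) :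
  (forall k, 0 <= u k) -> (n <= m)%nat -> sum_n u n <= sum_n u m.
Proof.
  intros Hu Hnm; unfold sum_n.
  rewrite (sum_n_m_Chasles u 0 n m) by lia.
  pose proof (sum_n_m_nonneg u (S n) m Hu); change plus with Rplus; lra.
Qed.

Lemma sum_n_diverges_of_blocks (u : nat -> R) (eps : R) :
  0 < eps -> (forall k, 0 <= u k) ->
  (forall N, exists M, (N <= M)%nat /\ eps <= sum_n_m u N M) ->
  is_lim_seq (sum_n u) p_infty.
Proof.
  intros Heps Hu Hblocks.
  assert (Hlarge : forall n, exists M, INR n * eps <= sum_n u M).
  { induction n as [|n [M HM]].
    - exists 0%nat; rewrite Rmult_0_l; apply sum_n_m_nonneg, Hu.
    - destruct (Hblocks (S M)) as [M' [HMM' Hblock]]; exists M'.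
      unfold sum_n in *; rewrite (sum_n_m_Chasles u 0 M M') by lia.
      change plus with Rplus; rewrite S_INR; lra. }
  apply is_lim_seq_spec; intros A.
  destruct (nfloor_ex (Rmax 0 (A / eps))) as [n [_ Hn]]; [apply Rmax_l |].
  destruct (Hlarge (S n)) as [M HM]; exists M; intros m Hm.
  apply Rlt_le_trans with (sum_n u M); [| now apply sum_n_le].
  apply Rlt_le_trans with (INR (S n) * eps); [| exact HM].
  pose proof (Rmax_r 0 (A / eps)).
  replace A with (A / eps * eps) by (field; lra).
  rewrite S_INR; apply Rmult_lt_compat_r; lra.
Qed.

Section Truncation.

Variables (a : nat -> R) (C alpha : R) (kstar : nat).
Hypothesis Hpos : forall k, 0 < a k.
Hypothesis HC : 1 <= C.
Hypotheses (Halpha0 : 0 < alpha) (Halpha1 : alpha < 1).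
Hypothesis Hreg : doubling_cond a C alpha kstar.
Hypothesis Hdiv : series_diverges a.

Let b := bseq a alpha.

Lemma bseq_S (k : nat) :
  (1 <= k)%nat -> b k = Rmin (a k) (Rpower (INR k) (- alpha)).
Proof. intros Hk; destruct k; [lia | reflexivity]. Qed.

Lemma bseq_pos (k : nat) : 0 < b k.
Proof.
  destruct k; [apply Hpos |].
  apply Rmin_glb_lt; [apply Hpos | apply Rpower_pos].
Qed.

Lemma bseq_doubling_cond : doubling_cond b C alpha kstar.
Proof.
  intros k1 k2 Hk1 Hk12 Hwin.
  destruct k1 as [|k1].
  - (* [rpow 0 alpha = 0], so the window at [k1 = 0] is just [{0}]. *)
    assert (k2 = 0%nat) as ->.
    { unfold rpow in Hwin; destruct (Req_EM_T (INR 0) 0) as [_ | H0];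
        [| now contradict H0].
      apply INR_eq; simpl in *; pose proof (pos_INR k2); lra. }
    pose proof (bseq_pos 0); nra.
  - rewrite !bseq_S by lia.
    apply Rmin_le_mult; [lra | now apply Hreg |].
    pose proof (Rpower_pos (INR (S k1)) (- alpha)).
    apply Rle_trans with (Rpower (INR (S k1)) (- alpha)); [| nra].
    apply Rpower_Ropp_le_l; [lra |].
    split; [apply lt_0_INR | apply le_INR]; lia.
Qed.

Lemma bseq_ge_before_excess (j k1 : nat) :
  (kstar <= j)%nat -> (1 <= j <= k1)%nat ->
  INR k1 <= INR j + Rpower (INR j) alpha ->
  Rpower (INR k1) (- alpha) < a k1 ->
  Rpower (INR k1) (- alpha) / C <= b j.
Proof.
  intros Hj Hjk1 Hwin Hexcess.
  assert (Hj0 : 0 < INR j) by (apply lt_0_INR; lia).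
  assert (Hak1 : a k1 <= C * a j).
  { apply Hreg; [lia | lia |]; now rewrite rpow_Rpower. }
  pose proof (Rpower_pos (INR k1) (- alpha)).
  rewrite bseq_S by lia; apply Rmin_glb.
  - apply Rmult_le_reg_l with C; [lra |].
    unfold Rdiv; rewrite Rmult_comm, Rmult_assoc, Rinv_l by lra; lra.
  - apply Rle_trans with (Rpower (INR k1) (- alpha)).
    + unfold Rdiv; rewrite <- (Rmult_1_r (Rpower _ _)) at 2.
      apply Rmult_le_compat_l; [lra |].
      rewrite <- Rinv_1; apply Rinv_le_contravar; lra.
    + apply Rpower_Ropp_le_l; [lra |].
      split; [exact Hj0 | apply le_INR; lia].
Qed.

Lemma bseq_window_sum (k1 : nat) :
  (2 * kstar + 2 <= k1)%nat -> Rpower (INR k1) (- alpha) < a k1 ->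
  exists L, INR k1 / 2 <= INR L /\ (L <= k1)%nat /\
    / (2 * C) <= sum_n_m b L k1.
Proof.
  intros Hk1 Hexcess.
  assert (Hk1R : 2 * INR kstar + 2 <= INR k1).
  { replace 2 with (INR 2) by reflexivity.
    rewrite <- mult_INR, <- plus_INR; now apply le_INR. }
  pose proof (pos_INR kstar).
  set (t := Rpower (INR k1) alpha).
  assert (Ht1 : 1 <= t) by (apply Rpower_ge_1; lra).
  assert (Htk1 : t <= INR k1) by (apply Rpower_le_self; lra).
  destruct (nfloor_ex (t / 2)) as [m [Hm Hm1]]; [lra |].
  assert (Hmk1 : (m <= k1)%nat) by (apply INR_le; lra).
  set (L := (k1 - m)%nat).
  assert (HL : INR L = INR k1 - INR m) by now apply minus_INR.
  exists L; split; [lra | split; [lia |]].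
  apply Rle_trans with (INR (S k1 - L) * (Rpower (INR k1) (- alpha) / C)).
  - replace (S k1 - L)%nat with (S m) by lia.
    rewrite S_INR, Rpower_Ropp; fold t.
    replace (/ (2 * C)) with (t / 2 * (/ t / C)) by (field; lra).
    apply Rmult_le_compat_r; [| lra].
    unfold Rdiv; apply Rmult_le_pos; left; apply Rinv_0_lt_compat; lra.
  - apply sum_n_m_ge_const; intros j Hj.
    assert (HjL : INR L <= INR j) by (apply le_INR; lia).
    apply bseq_ge_before_excess; [| split; [| lia] | | exact Hexcess].
    + apply INR_le; lra.
    + apply INR_le; simpl; lra.
    + assert (Hhalf : t / 2 <= Rpower (INR j) alpha).
      { apply Rle_trans with (Rpower (INR k1 / 2) alpha).
        - apply Rpower_half_ge; lra.
        - apply Rle_Rpower_l; lra. }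
      lra.
Qed.

Lemma bseq_tail_blocks (N : nat) :
  exists M, (N <= M)%nat /\ Rmin 1 (/ (2 * C)) <= sum_n_m b N M.
Proof.
  assert (Hb : forall k, 0 <= b k) by (intros k; left; apply bseq_pos).
  set (K := (2 * N + 2 * kstar + 2)%nat).
  destruct (classic (exists k1, (K <= k1)%nat /\ Rpower (INR k1) (- alpha) < a k1))
    as [[k1 [HKk1 Hexcess]] | Hcapped].
  - destruct (bseq_window_sum k1) as [L [HL [HLk1 Hsum]]]; [lia | exact Hexcess |].
    assert (HNL : (S N <= L)%nat).
    { apply INR_le; apply le_INR in HKk1; unfold K in HKk1.
      rewrite S_INR; rewrite !plus_INR, !mult_INR in HKk1; simpl in HKk1.
      pose proof (pos_INR kstar); lra. }
    exists k1; split; [lia |].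
    rewrite (sum_n_m_Chasles b N (pred L) k1) by lia.
    replace (S (pred L)) with L by lia.
    pose proof (sum_n_m_nonneg b N (pred L) Hb); pose proof (Rmin_r 1 (/ (2 * C))).
    change plus with Rplus; lra.
  - assert (Hba : forall k, (K < k)%nat -> b k = a k).
    { intros k Hk; rewrite bseq_S by lia; apply Rmin_left, Rnot_lt_le.
      intros Hexcess; apply Hcapped; exists k; split; [lia | exact Hexcess]. }
    destruct (proj2 (is_lim_seq_spec _ _) Hdiv (sum_n a K + 1)) as [M0 HM0].
    set (M := Nat.max M0 (S K)).
    exists M; split; [unfold M, K; lia |].
    rewrite (sum_n_m_Chasles b N K M) by (unfold M, K; lia).
    rewrite (sum_n_m_ext_loc b a (S K) M) by (intros k Hk; apply Hba; lia).
    assert (Htail : sum_n_m a (S K) M = sum_n a M - sum_n a K)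
      by exact (sum_n_m_sum_n (G := R_AbelianGroup) a K M ltac:(unfold M; lia)).
    rewrite Htail.
    assert (sum_n a K + 1 < sum_n a M) by (apply HM0; unfold M; lia).
    pose proof (sum_n_m_nonneg b N K Hb); pose proof (Rmin_l 1 (/ (2 * C))).
    change plus with Rplus; lra.
Qed.

End Truncation.

Theorem lemma4p3 (a : nat -> R) (C alpha : R) (kstar : nat)
  (Hpos : forall k, 0 < a k)
  (Hdiv : series_diverges a)
  (HC : 1 <= C) (Halpha0 : 0 < alpha) (Halpha1 : alpha < 1)
  (Hreg : doubling_cond a C alpha kstar) :
  doubling_cond (bseq a alpha) C alpha kstar /\ series_diverges (bseq a alpha).
Proof.
  split.
  - now apply bseq_doubling_cond.
  - apply sum_n_diverges_of_blocks with (Rmin 1 (/ (2 * C))).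
    + apply Rmin_glb_lt; [lra | apply Rinv_0_lt_compat; lra].
    + intros k; left; now apply bseq_pos.
    + intros N; now apply bseq_tail_blocks with kstar.
Qed.
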